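(* Let $H$ be either the English board $H_E$ or the French board $H_F$ (defined in the context). Let $b\subseteq H$ be a board position which is solvable and which is invariant under the $180^\circ$ rotation $(x,y)\mapsto(-x,-y)$. Equivalently, $b$ has one of the symmetry types 1–5: square symmetry, $90^\circ$ rotational symmetry, symmetry under both diagonal reflections, symmetry under both orthogonal reflections, or $180^\circ$ rotational symmetry. Then $b$ lies in position class A. Moreover, $b$ is solvable to the centre: there is a sequence of jumps from $b$ ending at the position consisting of the single peg at $(0,0)$.
   Context: Holes are points of $\mathbb{Z}^2$. - The English (33-hole) board is $H_E=\{(x,y)\in\mathbb{Z}^2: |x|\le 3,\ |y|\le 3,\ \min(|x|,|y|)\le 1\}$. - The French (37-hole) board is $H_F=H_E\cup\{(\pm2,\pm2)\}$. - A board position is a subset $b\subseteq H$, namely the set of holes occupied by pegs. - A jump: given $d\in\{(\pm1,0),(0,\pm1)\}$ and $p$ with $p,p+d,p+2d\in H$, $p,p+d\in b$ and $p+2d\notin b$, the jump replaces $b$ by $(b\setminus\{p,p+d\})\cup\{p+2d\}$. - A position is solvable if some finite sequence of jumps leads from it to a position with exactly one peg. Symmetry types. The symmetries of the board are the elements of the dihedral group of the square acting on $\mathbb{Z}^2$ about $(0,0)$. ''Orthogonal reflections'' are $(x,y)\mapsto(-x,y)$ and $(x,y)\mapsto(x,-y)$. ''Diagonal reflections'' are $(x,y)\mapsto(y,x)$ and $(x,y)\mapsto(-y,-x)$. Position class A. For a position $b$ and $i\in\{0,1,2\}$, let $N_i=|\{(x,y)\in b: x+y\equiv i \pmod 3\}|$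 and $M_i=|\{(x,y)\in b: x-y\equiv i\pmod 3\}|$. The position $b$ lies in position class A if all of the following hold: - $N_1+N_2$ is even and $N_0+N_2$ and $N_0+N_1$ are odd; - $M_1+M_2$ is even and $M_0+M_2$ and $M_0+M_1$ are odd. This is the position class of the single peg at $(0,0)$. *)

From Stdlib Require Import ZArith List Relations.
Import ListNotations.
Open Scope bool_scope.
Open Scope Z_scope.

Definition point := (Z * Z)%type.

(* A board (set of holes) and a position (set of occupied holes) are
   boolean predicates on Z^2. *)
Definition board := point -> bool.
Definition position := point -> bool.

Definition H_E : board := fun p =>
  let (x, y) := p in
  (Z.abs x <=? 3) && (Z.abs y <=? 3) && (Z.min (Z.abs x) (Z.abs y) <=? 1).

Definition H_F : board := fun p =>
  let (x, y) := p in
  H_E (x, y) || ((Z.abs x =? 2) && (Z.abs y =? 2)).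

Definition is_dir (d : point) : Prop :=
  d = (1, 0) \/ d = (-1, 0) \/ d = (0, 1) \/ d = (0, -1).

Definition padd (p q : point) : point := (fst p + fst q, snd p + snd q).
Definition pscale (k : Z) (p : point) : point := (k * fst p, k * snd p).

Definition jump (H : board) (b b' : position) : Prop :=
  exists (p d : point),
    is_dir d /\
    H p = true /\ H (padd p d) = true /\ H (padd p (pscale 2 d)) = true /\
    b p = true /\ b (padd p d) = true /\ b (padd p (pscale 2 d)) = false /\
    forall q : point,
      b' q = (if orb (andb (fst q =? fst p) (snd q =? snd p))
                     (andb (fst q =? fst (padd p d)) (snd q =? snd (padd p d)))
              then false
              else if andb (fst q =? fst (padd p (pscale 2 d)))
                           (snd q =? snd (padd p (pscale 2 d)))
              then true
              else b q).

Definition reaches (H : board) : position -> position -> Prop :=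
  clos_refl_trans position (jump H).

Definition single_peg_at (b : position) (p : point) : Prop :=
  forall q : point, b q = true <-> q = p.

Definition solvable (H : board) (b : position) : Prop :=
  exists b', reaches H b b' /\ exists p, single_peg_at b' p.

(* All points of the 7x7 square [-3,3]^2 (both boards lie inside it). *)
Definition square7 : list point :=
  flat_map (fun x => map (fun y => (x, y)) [-3; -2; -1; 0; 1; 2; 3])
           [-3; -2; -1; 0; 1; 2; 3].

(* N_i and M_i (counts of pegs in b, for b a subset of [-3,3]^2). *)
Definition Ncount (b : position) (i : Z) : nat :=
  length (filter (fun p => b p && (Z.modulo (fst p + snd p) 3 =? i)) square7).
Definition Mcount (b : position) (i : Z) : nat :=
  length (filter (fun p => b p && (Z.modulo (fst p - snd p) 3 =? i)) square7).

Definition classA (b : position) : Prop :=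
  Nat.even (Ncount b 1 + Ncount b 2) = true /\
  Nat.odd (Ncount b 0 + Ncount b 2) = true /\
  Nat.odd (Ncount b 0 + Ncount b 1) = true /\
  Nat.even (Mcount b 1 + Mcount b 2) = true /\
  Nat.odd (Mcount b 0 + Mcount b 2) = true /\
  Nat.odd (Mcount b 0 + Mcount b 1) = true.

From Stdlib Require Import ZArith List Relations.
From Stdlib Require Import Lia Bool Permutation.
Import ListNotations.
Open Scope Z_scope.

(* For each of the linear forms x + y and x - y, colour the holes by the value
   of the form mod 3.  The three holes involved in a jump lie on a line and
   meet each colour exactly once, so a jump flips the parity of all three
   colour counts and the pairwise parity differences are invariant.  For a
   position symmetric under the half-turn the counts of colours 1 and 2
   agree, and the only single pegs with compatible invariants sit at (0,0) or
   at an arm end (3,0), (-3,0), (0,3), (0,-3); all of these lie in class A.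
   A solution finishing at an arm end, say (3,0), must end with the jump
   (1,0),(2,0) -> (3,0), and the jump (2,0),(1,0) -> (0,0) can be made
   instead. *)

Definition point_eqb (p q : point) : bool := (fst p =? fst q) && (snd p =? snd q).

Lemma point_eqb_spec p q : reflect (p = q) (point_eqb p q).
Proof.
  apply iff_reflect; destruct p as [x y], q as [x' y']; unfold point_eqb; simpl.
  rewrite andb_true_iff, !Z.eqb_eq; split.
  - intros E; injection E as -> ->; auto.
  - intros [-> ->]; reflexivity.
Qed.

Definition mem (p : point) (S : list point) : bool := existsb (point_eqb p) S.

Lemma mem_spec p S : mem p S = true <-> In p S.
Proof.
  unfold mem; rewrite existsb_exists; split.
  - intros (q & Hq & E); destruct (point_eqb_spec p q); [subst; exact Hq | discriminate].
  - intros Hp; exists p; split; [exact Hp | destruct (point_eqb_spec p p); congruence].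
Qed.

Lemma odd_length_filter_xorb {A : Type} (g g' : A -> bool) (l : list A) :
  Nat.odd (length (filter g' l)) =
  xorb (Nat.odd (length (filter g l)))
       (Nat.odd (length (filter (fun x => xorb (g x) (g' x)) l))).
Proof.
  induction l as [|a l IH]; [reflexivity|]; simpl.
  destruct (g a), (g' a); simpl; rewrite ?Nat.odd_succ, <- ?Nat.negb_odd, IH;
    destruct (Nat.odd (length (filter g l))),
             (Nat.odd (length (filter (fun x => xorb (g x) (g' x)) l))); reflexivity.
Qed.

Lemma length_filter_sublist (l S : list point) (h : point -> bool) :
  NoDup l -> NoDup S -> incl S l ->
  length (filter (fun x => mem x S && h x) l) = length (filter h S).
Proof.
  intros Hl HS Hincl; apply Permutation_length, NoDup_Permutation; try now apply NoDup_filter.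
  intros x; rewrite !filter_In, andb_true_iff, mem_spec; firstorder.
Qed.

Lemma NoDup_square7 : NoDup square7.
Proof. repeat constructor; simpl; intuition discriminate. Qed.

Definition jump_result (b : position) (p d : point) : position := fun q =>
  if point_eqb q p || point_eqb q (padd p d) then false
  else if point_eqb q (padd p (pscale 2 d)) then true
  else b q.

Lemma jump_spec H b b' : jump H b b' ->
  exists p d, is_dir d /\
    H p = true /\ H (padd p d) = true /\ H (padd p (pscale 2 d)) = true /\
    b p = true /\ b (padd p d) = true /\ b (padd p (pscale 2 d)) = false /\
    forall q, b' q = jump_result b p d q.
Proof. intros J; exact J. Qed.

Lemma jump_intro H b p d : is_dir d ->
  H p = true -> H (padd p d) = true -> H (padd p (pscale 2 d)) = true ->
  b p = true -> b (padd p d) = true -> b (padd p (pscale 2 d)) = false ->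
  jump H b (jump_result b p d).
Proof.
  intros Hd H0 H1 H2 B0 B1 B2; exists p, d.
  do 7 (split; [assumption|]); intros q; reflexivity.
Qed.

Section JumpResult.

Variables (b : position) (p d : point).
Hypotheses (B0 : b p = true) (B1 : b (padd p d) = true)
           (B2 : b (padd p (pscale 2 d)) = false).

Lemma jump_result_spec q :
  jump_result b p d q = true <->
  q = padd p (pscale 2 d) \/ (q <> p /\ q <> padd p d /\ b q = true).
Proof.
  unfold jump_result.
  destruct (point_eqb_spec q p) as [->|N0]; [simpl; intuition congruence|].
  destruct (point_eqb_spec q (padd p d)) as [->|N1]; [simpl; intuition congruence|].
  destruct (point_eqb_spec q (padd p (pscale 2 d))) as [->|N2]; simpl; intuition congruence.
Qed.

Lemma xorb_jump_result q :
  xorb (b q) (jump_result b p d q) = mem q [p; padd p d; padd p (pscale 2 d)].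
Proof.
  unfold jump_result, mem; cbn [existsb].
  destruct (point_eqb_spec q p) as [->|N0]; [rewrite B0; reflexivity|].
  destruct (point_eqb_spec q (padd p d)) as [->|N1]; [rewrite B1; reflexivity|].
  destruct (point_eqb_spec q (padd p (pscale 2 d))) as [->|N2]; [rewrite B2; reflexivity|].
  apply xorb_nilpotent.
Qed.

End JumpResult.

Lemma jump_support H b b' : jump H b b' ->
  (forall q, b q = true -> H q = true) -> forall q, b' q = true -> H q = true.
Proof.
  intros J Hb q; destruct (jump_spec _ _ _ J) as (p & d & _ & H0 & H1 & H2 & B0 & B1 & B2 & F).
  rewrite F, jump_result_spec by assumption.
  intros [-> | (_ & _ & Hq)]; auto.
Qed.

Lemma reaches_support H b b' : reaches H b b' ->
  (forall q, b q = true -> H q = true) -> forall q, b' q = true -> H q = true.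
Proof.
  induction 1; eauto using jump_support.
Qed.

Lemma H_F_spec x y : H_F (x, y) = true <->
  (Z.abs x <= 3 /\ Z.abs y <= 3 /\ Z.min (Z.abs x) (Z.abs y) <= 1) \/
  (Z.abs x = 2 /\ Z.abs y = 2).
Proof. unfold H_F, H_E; rewrite orb_true_iff, !andb_true_iff, !Z.leb_le, !Z.eqb_eq; tauto. Qed.

Lemma H_E_sub_H_F q : H_E q = true -> H_F q = true.
Proof. destruct q as [x y]; unfold H_F; intros ->; reflexivity. Qed.

Lemma in_square7 x y : -3 <= x <= 3 -> -3 <= y <= 3 -> In (x, y) square7.
Proof.
  intros Hx Hy; unfold square7; apply in_flat_map; exists x; split.
  - simpl; lia.
  - apply in_map with (f := fun y => (x, y)); simpl; lia.
Qed.

Lemma H_F_in_square7 q : H_F q = true -> In q square7.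
Proof. destruct q as [x y]; rewrite H_F_spec; intros Hq; apply in_square7; lia. Qed.

Definition pneg (p : point) : point := (- fst p, - snd p).

Lemma square7_symmetric : map pneg square7 = rev square7.
Proof. reflexivity. Qed.

Section ResidueParity.

Variable f : point -> Z.
Hypothesis f_add : forall p q, f (padd p q) = f p + f q.
Hypothesis f_scale : forall k p, f (pscale k p) = k * f p.
Hypothesis f_dir : forall d, is_dir d -> f d = 1 \/ f d = -1.

Definition residue_count (b : position) (i : Z) : nat :=
  length (filter (fun p => b p && (f p mod 3 =? i)) square7).

Definition residue_parity (b : position) (i : Z) : bool := Nat.odd (residue_count b i).

Definition signature (b : position) : bool * bool :=
  (xorb (residue_parity b 0) (residue_parity b 1),
   xorb (residue_parity b 0) (residue_parity b 2)).

Lemma line_NoDup p d : is_dir d -> NoDup [p; padd p d; padd p (pscale 2 d)].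
Proof.
  intros Hd; pose proof (f_dir d Hd).
  repeat constructor; cbn [In]; intros Hin; repeat destruct Hin as [Hin | Hin]; try contradiction.
  all: apply (f_equal f) in Hin; rewrite ?f_add, ?f_scale in Hin; lia.
Qed.

Lemma line_meets_residue_once p d i : is_dir d -> 0 <= i < 3 ->
  length (filter (fun x => f x mod 3 =? i) [p; padd p d; padd p (pscale 2 d)]) = 1%nat.
Proof.
  intros Hd Hi; cbn [filter]; rewrite f_add, f_add, f_scale.
  destruct (f_dir d Hd) as [-> | ->];
  repeat match goal with |- context [?a =? ?b] => destruct (Z.eqb_spec a b) end;
  simpl; Z.div_mod_to_equations; lia.
Qed.

Lemma jump_flips_residue_parity H b b' i :
  (forall q, H q = true -> H_F q = true) -> jump H b b' -> 0 <= i < 3 ->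
  residue_parity b' i = negb (residue_parity b i).
Proof.
  intros HF J Hi; destruct (jump_spec _ _ _ J) as (p & d & Hd & H0 & H1 & H2 & B0 & B1 & B2 & F).
  unfold residue_parity, residue_count.
  rewrite (odd_length_filter_xorb (fun x => b x && (f x mod 3 =? i))).
  rewrite (filter_ext (fun x => xorb (b x && (f x mod 3 =? i)) (b' x && (f x mod 3 =? i)))
                      (fun x => mem x [p; padd p d; padd p (pscale 2 d)] && (f x mod 3 =? i))).
  2:{ intros x; rewrite F, <- (xorb_jump_result b p d) by assumption.
      destruct (b x), (jump_result b p d x), (f x mod 3 =? i); reflexivity. }
  rewrite length_filter_sublist, line_meets_residue_once; try assumption.
  - change (Nat.odd 1) with true; apply xorb_true_r.
  - apply NoDup_square7.
  - now apply line_NoDup.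
  - intros x Hx; apply H_F_in_square7, HF.
    destruct Hx as [<- | [<- | [<- | []]]]; assumption.
Qed.

Lemma jump_preserves_signature H b b' :
  (forall q, H q = true -> H_F q = true) -> jump H b b' -> signature b' = signature b.
Proof.
  intros HF J; unfold signature.
  rewrite !(jump_flips_residue_parity H b b') by (auto; lia).
  now destruct (residue_parity b 0), (residue_parity b 1), (residue_parity b 2).
Qed.

Lemma reaches_preserves_signature H b b' :
  (forall q, H q = true -> H_F q = true) -> reaches H b b' -> signature b' = signature b.
Proof.
  intros HF; induction 1; [eapply jump_preserves_signature; eassumption | reflexivity | congruence].
Qed.

Lemma symmetric_residue_count (b : position) :
  (forall x y, b (- x, - y) = b (x, y)) -> residue_count b 1 = residue_count b 2.
Proof.
  intros Hsym; unfold residue_count.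
  rewrite <- (length_rev (filter _ square7)), <- filter_rev, <- square7_symmetric,
    filter_map_swap, length_map.
  apply (f_equal (@length point)), filter_ext; intros q.
  assert (Hneg : f (pneg q) = - f q).
  { replace (pneg q) with (pscale (-1) q) by (unfold pneg, pscale; f_equal; lia).
    rewrite f_scale; lia. }
  assert (Hres : ((- f q) mod 3 =? 1) = (f q mod 3 =? 2)).
  { apply eq_true_iff_eq; rewrite !Z.eqb_eq; Z.div_mod_to_equations; lia. }
  destruct q as [x y]; rewrite Hneg, Hres; unfold pneg; simpl; rewrite Hsym; reflexivity.
Qed.

Lemma single_peg_mem b p : single_peg_at b p -> forall x, b x = mem x [p].
Proof.
  intros Hb x; apply eq_true_iff_eq; rewrite mem_spec, (Hb x); simpl; intuition.
Qed.

Lemma single_peg_residue_count b p i : single_peg_at b p -> In p square7 ->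
  residue_count b i = if f p mod 3 =? i then 1%nat else 0%nat.
Proof.
  intros Hb Hp; unfold residue_count.
  rewrite (filter_ext _ (fun x => mem x [p] && (f x mod 3 =? i)))
    by (intros x; rewrite (single_peg_mem b p Hb x); reflexivity).
  rewrite length_filter_sublist.
  - simpl; now destruct (f p mod 3 =? i).
  - apply NoDup_square7.
  - repeat constructor; intros [].
  - intros x [<- | []]; exact Hp.
Qed.

Lemma single_peg_signature b p : single_peg_at b p -> In p square7 ->
  fst (signature b) = snd (signature b) -> f p mod 3 = 0 /\ signature b = (true, true).
Proof.
  intros Hb Hp; unfold signature, residue_parity; simpl.
  rewrite !(single_peg_residue_count b p) by assumption.
  assert (Hr : f p mod 3 = 0 \/ f p mod 3 = 1 \/ f p mod 3 = 2) by (Z.div_mod_to_equations; lia).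
  destruct Hr as [-> | [-> | ->]]; simpl; intuition discriminate.
Qed.

Lemma symmetric_solution_signature H b bf p :
  (forall q, H q = true -> H_F q = true) ->
  (forall x y, b (- x, - y) = b (x, y)) -> reaches H b bf -> single_peg_at bf p ->
  In p square7 -> f p mod 3 = 0 /\ signature b = (true, true).
Proof.
  intros HF Hsym R Hbf Hp.
  rewrite <- (reaches_preserves_signature H b bf HF R).
  apply (single_peg_signature bf p Hbf Hp).
  rewrite (reaches_preserves_signature H b bf HF R); unfold signature, residue_parity; simpl.
  now rewrite symmetric_residue_count.
Qed.

End ResidueParity.

Definition sum_form (p : point) : Z := fst p + snd p.
Definition diff_form (p : point) : Z := fst p - snd p.

Lemma sum_form_add p q : sum_form (padd p q) = sum_form p + sum_form q.
Proof. unfold sum_form, padd; simpl; lia. Qed.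

Lemma sum_form_scale k p : sum_form (pscale k p) = k * sum_form p.
Proof. unfold sum_form, pscale; simpl; lia. Qed.

Lemma sum_form_dir d : is_dir d -> sum_form d = 1 \/ sum_form d = -1.
Proof. intros [-> | [-> | [-> | ->]]]; cbv; auto. Qed.

Lemma diff_form_add p q : diff_form (padd p q) = diff_form p + diff_form q.
Proof. unfold diff_form, padd; simpl; lia. Qed.

Lemma diff_form_scale k p : diff_form (pscale k p) = k * diff_form p.
Proof. unfold diff_form, pscale; simpl; lia. Qed.

Lemma diff_form_dir d : is_dir d -> diff_form d = 1 \/ diff_form d = -1.
Proof. intros [-> | [-> | [-> | ->]]]; cbv; auto. Qed.

Lemma classA_of_signatures b :
  signature sum_form b = (true, true) -> signature diff_form b = (true, true) -> classA b.
Proof.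
  unfold signature, residue_parity; intros HN HM.
  injection HN as HN1 HN2; injection HM as HM1 HM2.
  change (residue_count sum_form b) with (Ncount b) in HN1, HN2.
  change (residue_count diff_form b) with (Mcount b) in HM1, HM2.
  unfold classA; rewrite !Nat.even_add, !Nat.odd_add, <- !Nat.negb_odd.
  revert HN1 HN2 HM1 HM2.
  destruct (Nat.odd (Ncount b 0)), (Nat.odd (Ncount b 1)), (Nat.odd (Ncount b 2)),
    (Nat.odd (Mcount b 0)), (Nat.odd (Mcount b 1)), (Nat.odd (Mcount b 2));
    simpl; intuition discriminate.
Qed.

Lemma board_residue_zero p : H_F p = true ->
  sum_form p mod 3 = 0 -> diff_form p mod 3 = 0 ->
  p = (0, 0) \/ exists e, is_dir e /\ p = pscale 3 e.
Proof.
  destruct p as [x y]; rewrite H_F_spec; unfold sum_form, diff_form; simpl; intros Hp Hs Hd.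
  assert (x = 0 /\ y = 0 \/ x = 3 /\ y = 0 \/ x = -3 /\ y = 0 \/ x = 0 /\ y = 3 \/ x = 0 /\ y = -3)
    as [[-> ->] | [[-> ->] | [[-> ->] | [[-> ->] | [-> ->]]]]]
    by (Z.div_mod_to_equations; lia).
  - left; reflexivity.
  - right; exists (1, 0); split; [unfold is_dir; auto | reflexivity].
  - right; exists (-1, 0); split; [unfold is_dir; auto | reflexivity].
  - right; exists (0, 1); split; [unfold is_dir; auto | reflexivity].
  - right; exists (0, -1); split; [unfold is_dir; auto | reflexivity].
Qed.

Lemma arm_end_jump p d e : H_F p = true -> is_dir d -> is_dir e ->
  padd p (pscale 2 d) = pscale 3 e -> p = e /\ d = e.
Proof.
  destruct p as [x y]; rewrite H_F_spec; intros Hp Hd He E.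
  destruct Hd as [-> | [-> | [-> | ->]]], He as [-> | [-> | [-> | ->]]];
    cbv [padd pscale fst snd] in E; injection E as Ex Ey; split; f_equal; lia.
Qed.

Lemma symmetric_single_peg_centre b p :
  (forall x y, b (- x, - y) = b (x, y)) -> single_peg_at b p -> p = (0, 0).
Proof.
  destruct p as [x y]; intros Hsym Hb.
  assert (E : (- x, - y) = (x, y)) by (apply Hb; rewrite Hsym; apply Hb; reflexivity).
  injection E as Ex Ey; f_equal; lia.
Qed.

Lemma jump_onto_single_peg H b b' P : jump H b b' -> single_peg_at b' P ->
  exists p d, is_dir d /\ H p = true /\ H (padd p d) = true /\
    padd p (pscale 2 d) = P /\ forall q, b q = true <-> q = p \/ q = padd p d.
Proof.
  intros J HP; destruct (jump_spec _ _ _ J) as (p & d & Hd & H0 & H1 & _ & B0 & B1 & B2 & F).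
  assert (Hb' : forall q, b' q = true <->
            q = padd p (pscale 2 d) \/ (q <> p /\ q <> padd p d /\ b q = true))
    by (intros q; rewrite F; apply jump_result_spec; assumption).
  assert (EP : padd p (pscale 2 d) = P) by (apply HP, Hb'; left; reflexivity).
  exists p, d; do 4 (split; [assumption|]).
  intros q; split; [|intros [-> | ->]; assumption].
  intros Bq.
  destruct (point_eqb_spec q p) as [-> | N0]; [left; reflexivity|].
  destruct (point_eqb_spec q (padd p d)) as [-> | N1]; [right; reflexivity|].
  assert (Eq : q = P) by (apply HP, Hb'; right; auto).
  congruence.
Qed.

Lemma centre_jump H b e : is_dir e ->
  H e = true -> H (padd e e) = true -> H (0, 0) = true ->
  (forall q, b q = true <-> q = e \/ q = padd e e) ->
  exists b', jump H b b' /\ single_peg_at b' (0, 0).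
Proof.
  intros He H1 H2 H0 Hb.
  assert (E1 : padd (padd e e) (pneg e) = e)
    by (destruct e; cbv [padd pneg fst snd]; f_equal; lia).
  assert (E2 : padd (padd e e) (pscale 2 (pneg e)) = (0, 0))
    by (destruct e; cbv [padd pscale pneg fst snd]; f_equal; lia).
  assert (Hne : (0, 0) <> e /\ (0, 0) <> padd e e)
    by (destruct He as [-> | [-> | [-> | ->]]]; split; discriminate).
  assert (B0 : b (padd e e) = true) by (apply Hb; auto).
  assert (B1 : b (padd (padd e e) (pneg e)) = true) by (rewrite E1; apply Hb; auto).
  assert (B2 : b (padd (padd e e) (pscale 2 (pneg e))) = false)
    by (rewrite E2; destruct (b (0, 0)) eqn:B; [apply Hb in B; intuition | reflexivity]).
  exists (jump_result b (padd e e) (pneg e)); split.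
  - apply jump_intro; try assumption; rewrite ?E1, ?E2; try assumption.
    destruct He as [-> | [-> | [-> | ->]]]; unfold is_dir; cbv; auto.
  - intros q; rewrite jump_result_spec, E1, E2, Hb by assumption; intuition congruence.
Qed.

Lemma solution_recentred H b bf e :
  (forall q, H q = true -> H_F q = true) -> H (0, 0) = true -> is_dir e ->
  reaches H b bf -> single_peg_at bf (pscale 3 e) -> ~ single_peg_at b (pscale 3 e) ->
  exists b', reaches H b b' /\ single_peg_at b' (0, 0).
Proof.
  intros HF H0 He R Hbf Hb.
  apply clos_rt_rtn1 in R; revert Hbf; destruct R as [| c bf Hlast Hprefix].
  { contradiction. }
  intros Hbf.
  destruct (jump_onto_single_peg H c bf _ Hlast Hbf) as (p & d & Hd & Hp & Hp1 & Ep & Hc).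
  destruct (arm_end_jump p d e (HF p Hp) Hd He Ep) as [-> ->].
  destruct (centre_jump H c e He Hp Hp1 H0 Hc) as (b' & J & Hb').
  exists b'; split; [|exact Hb'].
  apply rt_trans with c; [apply clos_rtn1_rt; exact Hprefix | apply rt_step; exact J].
Qed.

Theorem theorem1 :
  forall (H : board), (H = H_E \/ H = H_F) ->
  forall (b : position),
    (forall q, b q = true -> H q = true) ->
    solvable H b ->
    (forall x y : Z, b (-x, -y) = b (x, y)) ->
    classA b /\
    exists b', reaches H b b' /\ single_peg_at b' (0, 0).
Proof.
  intros H HH b Hb [bf [R [p Hbf]]] Hsym.
  assert (HF : forall q, H q = true -> H_F q = true)
    by (destruct HH as [-> | ->]; auto using H_E_sub_H_F).
  assert (Hp : H_F p = true) by (apply HF, (reaches_support H b bf R Hb), Hbf; reflexivity).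
  destruct (symmetric_solution_signature sum_form sum_form_add sum_form_scale sum_form_dir
              H b bf p HF Hsym R Hbf (H_F_in_square7 p Hp)) as [Hsum Hsig_sum].
  destruct (symmetric_solution_signature diff_form diff_form_add diff_form_scale diff_form_dir
              H b bf p HF Hsym R Hbf (H_F_in_square7 p Hp)) as [Hdiff Hsig_diff].
  split; [exact (classA_of_signatures b Hsig_sum Hsig_diff)|].
  destruct (board_residue_zero p Hp Hsum Hdiff) as [-> | (e & He & ->)].
  - exists bf; split; assumption.
  - apply (solution_recentred H b bf e HF); try assumption.
    + destruct HH as [-> | ->]; reflexivity.
    + intros Hb_single; apply (symmetric_single_peg_centre b _ Hsym) in Hb_single.
      destruct He as [-> | [-> | [-> | ->]]]; discriminate.
Qed.
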